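(* Let $A$ be an $n\times n$ matrix over $\mathbb{C}$ (or $\mathbb{R}$) with $A^3\neq 0$. Then $A^2\otimes A=A\otimes A^2$ if and only if $A^2\otimes A^3\otimes A=A\otimes A^3\otimes A^2$.
   Context: Here $\otimes$ denotes the Kronecker product of matrices: for $A=[a_{ij}]$, $A\otimes B$ is the block matrix whose $(i,j)$ block is $a_{ij}B$. *)

From mathcomp Require Import all_boot all_order all_algebra.
From mathcomp Require Export mxtens.
Set Implicit Arguments. Unset Strict Implicit. Unset Printing Implicit Defensive.

(* The entry of X ⊗ C ⊗ Y at ((i,a,j),(k,b,l)) is x_ik c_ab y_jl. Choosing a, b
   with c_ab ≠ 0 in C = A^3 and cancelling it in the integral domain recovers the
   entries of X ⊗ Y, so the middle factor A^3 can be removed from the second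
   identity; conversely it can always be inserted. *)
From mathcomp Require Import all_boot all_order all_algebra.
From mathcomp Require Import mxtens.
Import GRing.Theory Num.Theory.
Local Open Scope ring_scope.

Lemma tensmx_eqP (R : pzRingType) m n p q (X Z : 'M[R]_(m, n)) (Y W : 'M[R]_(p, q)) :
  X *t Y = Z *t W <-> forall i j k l, X i k * Y j l = Z i k * W j l.
Proof.
split=> [eqXY i j k l | eqXY]; first by rewrite -!tensmxE eqXY.
apply/matrixP => I K.
by case: (mxtens_indexP I) => i j; case: (mxtens_indexP K) => k l; rewrite !tensmxE.
Qed.

Lemma tensmx_cancel_mid (R : idomainType) m n r s p q
    (X Z : 'M[R]_(m, n)) (C : 'M[R]_(r, s)) (Y W : 'M[R]_(p, q)) :
  C != 0 -> X *t C *t Y = Z *t C *t W <-> X *t Y = Z *t W.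
Proof.
move=> /matrix0Pn [a [b Cab_neq0]].
split=> [/tensmx_eqP eqXCY | /tensmx_eqP eqXY]; apply/tensmx_eqP => I j K l.
- have := eqXCY (mxtens_index (I, a)) j (mxtens_index (K, b)) l.
  by rewrite !tensmxE mulrAC [RHS]mulrAC => /(mulIf Cab_neq0).
- case: (mxtens_indexP I) => i c; case: (mxtens_indexP K) => k d.
  by rewrite !tensmxE mulrAC eqXY mulrAC.
Qed.

Theorem lemma2p5 (R : numFieldType) (n : nat) (A : 'M[R]_n) :
  A ^+ 3 != 0 ->
  ((A ^+ 2) *t A = A *t (A ^+ 2) <->
   (A ^+ 2) *t (A ^+ 3) *t A = A *t (A ^+ 3) *t (A ^+ 2)).
Proof. by move=> A3_neq0; apply: iff_sym; apply: tensmx_cancel_mid. Qed.
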